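(* Let $\mathcal F=\{f_w:w\in\mathcal W\}$ be measurable functions $\mathsf Z\to\mathbb R$ indexed by a countable set $\mathcal W$, let $Q$ be a distribution on $\mathcal W$, $\gamma>0$, and let $\mu$ be a distribution on $\mathsf Z$ such that $f_w(Z)$, $Z\sim\mu$, is $\sigma^2$-subgaussian for all $w\in\mathcal W$. Let $\widehat w(\mu)$ be an index minimizing $\mu(f_w)$ over $\mathcal W$. If $S=(Z_1,\dots,Z_n)\sim\mu^{\otimes n}$ and, given $S=s$, $W$ has the Gibbs distribution $P^{\gamma,Q}_{W|S=s}(\mathrm dw)\propto e^{-\gamma\mu_s(f_w)}Q(\mathrm dw)$, then $$\mathbb E[\mu(f_W)]\le\inf_{w\in\mathcal W}\mu(f_w)+\frac1\gamma D(\delta_{\widehat w(\mu)}\|Q)+\frac{\gamma\sigma^2}{2n}.$$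
   Context: For $s=(z_1,\dots,z_n)$, $\mu_s(f_w)=\frac1n\sum_{i=1}^nf_w(z_i)$ is the empirical mean and $\mu(f_w)=\mathbb E_{Z\sim\mu}f_w(Z)$ the true mean. $\sigma^2$-subgaussian: $\mathbb E[e^{\lambda(X-\mathbb EX)}]\le e^{\lambda^2\sigma^2/2}$ for all real $\lambda$. $D$ is relative entropy and $D(\delta_{\widehat w}\|Q)=\log(1/Q(\widehat w))$. *)

From HB Require Import structures.
From mathcomp Require Import all_boot all_order all_algebra.
From mathcomp Require Import all_classical all_reals all_analysis.
Set Implicit Arguments.
Unset Strict Implicit.
Unset Printing Implicit Defensive.
Import Order.TTheory GRing.Theory Num.Theory.
Local Open Scope classical_set_scope.
Local Open Scope ring_scope.

Section Defs.
Context {d : measure_display} {Z : measurableType d} {R : realType}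
        {W : countType}.

Definition true_mean (mu : probability Z R) (f : W -> Z -> R) (w : W) : R :=
  fine (\int[mu]_z (f w z)%:E)%E.

Definition emp_mean (f : W -> Z -> R) (s : seq Z) (w : W) : R :=
  (\sum_(z <- s) f w z) / (size s)%:R.

Definition subgaussian (mu : probability Z R) (g : Z -> R) (sigma : R) : Prop :=
  mu.-integrable setT (fun z => (g z)%:E) /\
  forall lam : R,
    (\int[mu]_z (expR (lam * (g z - fine (\int[mu]_x (g x)%:E)%E)))%:E
       <= (expR (lam ^+ 2 * sigma ^+ 2 / 2))%:E)%E.

Definition distribution_on (Q : W -> R) : Prop :=
  (forall w, 0 <= Q w) /\ (\esum_(w in [set: W]) (Q w)%:E = 1)%E.

(* sum over the countable set W of an extended-real family
   (= integral against counting measure: positive part minus negative part) *)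
Definition dsum (h : W -> \bar R) : \bar R :=
  (\esum_(w in [set: W]) maxe (h w) 0%E - \esum_(w in [set: W]) maxe (- h w) 0%E)%E.

Definition gibbs_weight (f : W -> Z -> R) (Q : W -> R) (gamma : R)
  (s : seq Z) (w : W) : R := expR (- gamma * emp_mean f s w) * Q w.

(* normalizing constant (finite a.s.; `fine` maps +oo to 0, a null event) *)
Definition gibbs_norm (f : W -> Z -> R) (Q : W -> R) (gamma : R) (s : seq Z) : R :=
  fine (\esum_(w in [set: W]) (gibbs_weight f Q gamma s w)%:E)%E.

Definition gibbs (f : W -> Z -> R) (Q : W -> R) (gamma : R) (s : seq Z) (w : W) : R :=
  gibbs_weight f Q gamma s w / gibbs_norm f Q gamma s.

Definition gibbs_risk (mu : probability Z R) (f : W -> Z -> R) (Q : W -> R)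
  (gamma : R) (s : seq Z) : \bar R :=
  dsum (fun w => (gibbs f Q gamma s w * true_mean mu f w)%:E).

(* expectation over S = (Z_1,...,Z_n) ~ mu^{(x) n}, as the iterated integral
   E F(S) = \int mu(dz_1) ... \int mu(dz_n) F(z_1 :: ... :: z_n :: [::]) *)
Fixpoint iid_expect (mu : probability Z R) (n : nat) (F : seq Z -> \bar R) : \bar R :=
  match n with
  | 0 => F [::]
  | n'.+1 => (\int[mu]_z iid_expect mu n' (fun s => F (z :: s)))%E
  end.

Definition KL_dirac (Q : W -> R) (w : W) : \bar R :=
  if 0 < Q w then (ln (Q w)^-1)%:E else +oo%E.

End Defs.

From HB Require Import structures.
From mathcomp Require Import all_boot all_order all_algebra.
From mathcomp Require Import all_classical all_reals all_analysis.
From mathcomp Require Import measurable_realfun.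
From mathcomp Require Import lra ring.
Import Order.TTheory GRing.Theory Num.Theory.
Local Open Scope classical_set_scope.
Local Open Scope ring_scope.

(* Fix a sample s of size n, write q_s(w) = e^{-gamma mu_s(f_w)} Q(w) for the
   unnormalised Gibbs weights, Z_s >= q_s(w_hat) for their sum, and take any
   A > 0.  Young's inequality x y <= e^x + y ln y - y at x = gamma mu(f_w),
   y = A / Z_s, together with ln Z_s >= ln q_s(w_hat), gives for every w
     (q_s(w) / Z_s) mu(f_w) <= q_s(w) e^{gamma mu(f_w)} / (gamma A) + (q_s(w) / Z_s) K_s,
     K_s = mu_s(f_w_hat) + (ln (1 / Q(w_hat)) + ln A - 1) / gamma,
   so the Gibbs risk is at most
     K_s + sum_w Q(w) e^{gamma mu(f_w)} / (gamma A) * prod_i e^{-(gamma/n) f_w(z_i)}.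
   This bound is affine in the sample mean and in products over the sample, so
   its expectation under mu^n factorises.  Subgaussianity bounds each factor
   E e^{-(gamma/n) f_w(Z)} by e^{-(gamma/n) mu(f_w) + gamma^2 sigma^2 / (2 n^2)},
   and with A = e^{gamma^2 sigma^2 / (2 n)} the sum collapses to
   sum_w Q(w) / gamma = 1 / gamma, cancelling the -1/gamma in K_s.  The
   expectation is a monotone iterated integral, so the Gibbs risk never has
   to be shown measurable. *)

Lemma expR_young {R : realType} (x y : R) : 0 < y -> x * y <= expR x + y * ln y - y.
Proof.
move=> y0; have := expR_ge1Dx (x - ln y).
rewrite expRD expRN lnK ?posrE //.
move/(ler_wpM2l (ltW y0)); rewrite mulrCA mulfV ?gt_eqF // mulr1.
lra.
Qed.

Lemma ereal_inf_range_min {R : realType} {T : Type} (a : T -> \bar R) t :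
  (forall u, (a t <= a u)%E) -> ereal_inf (range a) = a t.
Proof.
move=> amin; apply/le_anti/andP; split; first by apply: ereal_inf_lbound; exists t.
by apply: le_ereal_inf_tmp => _ [u _ <-].
Qed.

Section esum_countable.
Local Open Scope ereal_scope.
Context {R : realType} {W : countType}.

Definition pickle_seq (a : W -> \bar R) (i : nat) : \bar R :=
  if pickle_inv i is Some w then a w else 0.

Lemma pickle_seq_ge0 (a : W -> \bar R) :
  (forall w, 0 <= a w) -> forall i, 0 <= pickle_seq a i.
Proof. by move=> a0 i; rewrite /pickle_seq; case: pickle_inv. Qed.

Lemma esum_pickle_seq (a : W -> \bar R) : (forall w, 0 <= a w) ->
  \esum_(w in [set: W]) a w = \sum_(i <oo) pickle_seq a i.
Proof.
move=> a0; have a0' := pickle_seq_ge0 _ a0.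
rewrite nneseries_esumT // (esumID (range (@pickle W))) //.
rewrite [X in _ + X]esum1 ?adde0; last first.
  move=> i [_ /= ni]; rewrite /pickle_seq; case E: pickle_inv => [w|//].
  by case: ni; exists w => //; have := @pickle_invK W i; rewrite E.
rewrite setTI esum_image; last by move=> x y _ _; exact: (pcan_inj pickleK_inv).
by apply: eq_esum => w _; rewrite /pickle_seq pickleK_inv.
Qed.

Lemma ge0_esumZl (k : R) (a : W -> \bar R) : (0 <= k)%R -> (forall w, 0 <= a w) ->
  \esum_(w in [set: W]) (k%:E * a w) = k%:E * \esum_(w in [set: W]) a w.
Proof.
move=> k0 a0; rewrite !esum_pickle_seq // => [|w]; last by rewrite mule_ge0.
rewrite -nneseriesZl; last by move=> i _; exact: pickle_seq_ge0.
by apply: eq_eseriesr => i _; rewrite /pickle_seq; case: pickle_inv; rewrite ?mule0.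
Qed.

End esum_countable.

Section integral_facts.
Local Open Scope ereal_scope.
Context {d : measure_display} {T : measurableType d} {R : realType}.
Variable mu : {measure set T -> \bar R}.

(* No measurability is needed: the integral of any function is the difference
   of the suprema of the integrals of the simple functions below its positive
   and negative parts. *)
Lemma le_integral_pointwise (D : set T) (f g : T -> \bar R) :
  (forall x, D x -> f x <= g x) -> \int[mu]_(x in D) f x <= \int[mu]_(x in D) g x.
Proof.
move=> fg; rewrite /integral; apply: leeB; apply: ereal_sup_le => _ [h /= hf <-];
  exists h => //= x; apply: (le_trans (hf x)); rewrite !(funeposE, funenegE) /patch;
  case: ifPn => xD; rewrite ?lexx //.
- by apply: leU2 => //; apply: fg; rewrite inE in xD.
- by apply: leU2 => //; rewrite leeN2; apply: fg; rewrite inE in xD.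
Qed.

Lemma emeasurable_esum (W : countType) (h : W -> T -> \bar R) :
  (forall w x, 0 <= h w x) -> (forall w, measurable_fun setT (h w)) ->
  measurable_fun setT (fun x => \esum_(w in [set: W]) h w x).
Proof.
move=> h0 mh.
rewrite (_ : (fun x => _) = fun x => \sum_(i <oo | i \in xpredT) pickle_seq (h^~ x) i).
  apply: ge0_emeasurable_sum => [k x _ _|k _]; rewrite /pickle_seq; case: pickle_inv => //.
by apply: funext => x; rewrite esum_pickle_seq.
Qed.

Lemma ge0_integral_esum (W : countType) (h : W -> T -> \bar R) :
  (forall w x, 0 <= h w x) -> (forall w, measurable_fun setT (h w)) ->
  \int[mu]_x (\esum_(w in [set: W]) h w x) = \esum_(w in [set: W]) \int[mu]_x h w x.
Proof.
move=> h0 mh; under eq_integral do rewrite esum_pickle_seq //.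
rewrite integral_nneseries //; last 2 first.
- by move=> i; rewrite /pickle_seq; case: pickle_inv.
- by move=> i x _; exact: pickle_seq_ge0.
rewrite esum_pickle_seq => [|w]; last exact: integral_ge0.
apply: eq_eseriesr => i _; rewrite /pickle_seq; case: pickle_inv => // .
exact: integral0.
Qed.

Lemma le_integralD_ge0 (A : T -> R) (B : T -> \bar R) :
  mu.-integrable setT (EFin \o A) -> (forall x, 0 <= B x) -> measurable_fun setT B ->
  \int[mu]_x ((A x)%:E + B x) <= \int[mu]_x (A x)%:E + \int[mu]_x B x.
Proof.
move=> iA B0 mB.
have [->|Boo] := eqVneq (\int[mu]_x B x) +oo.
  have := integrable_fin_num measurableT iA.
  by case: (\int[mu]_x (A x)%:E) => // r _; rewrite addey ?leey.
rewrite integralD //; apply/integrableP; split => //.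
by under eq_integral do rewrite gee0_abs //; rewrite ltey.
Qed.

Lemma integrable_EFin_mulr (g : T -> R) (k : R) :
  mu.-integrable setT (EFin \o g) -> mu.-integrable setT (EFin \o (fun x => g x * k)%R).
Proof.
move=> ig; rewrite (_ : EFin \o _ = fun x => k%:E * (g x)%:E).
  exact: integrableZl.
by apply: funext => x; rewrite /= mulrC EFinM.
Qed.

Lemma integral_EFin_mulr (g : T -> R) (k : R) : mu.-integrable setT (EFin \o g) ->
  \int[mu]_x (g x * k)%:E = (fine (\int[mu]_x (g x)%:E) * k)%:E.
Proof.
move=> ig; under eq_integral do rewrite mulrC EFinM.
rewrite integralZl //; move: (integrable_fin_num measurableT ig).
by case: (\int[mu]_x (g x)%:E) => // r _; rewrite -EFinM mulrC.
Qed.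

End integral_facts.

Section iid_expectation.
Local Open Scope ereal_scope.
Context {d : measure_display} {Z : measurableType d} {R : realType}.
Variable mu : probability Z R.

Lemma le_iid_expect n (F G : seq Z -> \bar R) :
  (forall s, size s = n -> F s <= G s) -> iid_expect mu n F <= iid_expect mu n G.
Proof.
elim: n F G => [|n IH] F G FG /=; first exact: FG.
by apply: le_integral_pointwise => z _; apply: IH => s hs; apply: FG; rewrite /= hs.
Qed.

Context {W : countType} {g : Z -> R} {Ig : R} {h : W -> Z -> R} {Ih : W -> R}.
Hypothesis ig : mu.-integrable setT (EFin \o g).
Hypothesis Ige : \int[mu]_z (g z)%:E = Ig%:E.
Hypothesis h0 : forall w z, (0 <= h w z)%R.
Hypothesis mh : forall w, measurable_fun setT (h w).
Hypothesis Ihe : forall w, \int[mu]_z (h w z)%:E <= (Ih w)%:E.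

Let Ih0 w : (0 <= Ih w)%R.
Proof.
by rewrite -lee_fin; apply: le_trans (Ihe w); apply: integral_ge0 => z _; rewrite lee_fin.
Qed.

Lemma integral_affine_esum_le (c : R) (b : W -> R) : (forall w, 0 <= b w)%R ->
  \int[mu]_z ((c + g z)%:E + \esum_(w in [set: W]) (b w * h w z)%:E)
  <= (c + Ig)%:E + \esum_(w in [set: W]) (b w * Ih w)%:E.
Proof.
move=> b0.
have bh0 w z : 0 <= (b w * h w z)%:E by rewrite lee_fin mulr_ge0.
have mbh w : measurable_fun setT (fun z => (b w * h w z)%:E).
  by apply/measurable_EFinP; apply: measurable_funM => //; exact: measurable_cst.
have ic : mu.-integrable setT (fun=> c%:E) by exact: finite_measure_integrable_cst.
have icg : mu.-integrable setT (EFin \o (fun z => c + g z)%R).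
  by rewrite (_ : EFin \o _ = fun z => c%:E + (g z)%:E) //; exact: integrableD.
apply: le_trans (le_integralD_ge0 mu _ _ icg _ _) _.
- by move=> z; apply: esum_ge0 => w _.
- exact: emeasurable_esum.
rewrite ge0_integral_esum //; apply: leeD.
  rewrite (_ : (fun z => _) = fun z => c%:E + (g z)%:E) // integralD //.
  rewrite (integral_cst mu measurableT c%:E).
  rewrite [X in _ * X](_ : _ = 1) ?mule1; last exact: probability_setT.
  by rewrite Ige.
apply: le_esum => w _.
under eq_integral do rewrite EFinM.
rewrite ge0_integralZl_EFin //; last 2 first.
- by move=> z _; rewrite lee_fin.
- exact/measurable_EFinP.
by rewrite EFinM lee_wpmul2l ?lee_fin.
Qed.

Lemma iid_expect_affine_esum_le n (c : R) (a : W -> R) : (forall w, 0 <= a w)%R ->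
  iid_expect mu n (fun s => (c + \sum_(z <- s) g z)%:E
      + \esum_(w in [set: W]) (a w * \prod_(z <- s) h w z)%:E)
  <= (c + n%:R * Ig)%:E + \esum_(w in [set: W]) (a w * Ih w ^+ n)%:E.
Proof.
elim: n c a => [|n IH] c a a0 /=.
  by rewrite big_nil mul0r addr0 leeD //; apply: le_esum => w _; rewrite big_nil expr0.
have an0 w : (0 <= a w * Ih w ^+ n)%R by rewrite mulr_ge0 ?exprn_ge0.
apply: le_trans
  (le_trans _ (integral_affine_esum_le (c + n%:R * Ig)%R _ an0)) _; last first.
  rewrite leeD // ?lee_fin ?mulrS; first lra.
  by apply: le_esum => w _; rewrite exprSr mulrA.
apply: le_integral_pointwise => z _.
have ahz0 w : (0 <= a w * h w z)%R by rewrite mulr_ge0.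
apply: le_trans (le_trans _ (IH (c + g z)%R _ ahz0)) _.
  apply: le_iid_expect => s _; rewrite big_cons addrA leeD //.
  by apply: le_esum => w _; rewrite big_cons mulrA.
by rewrite leeD // ?lee_fin; [lra | apply: le_esum => w _; rewrite lee_fin mulrAC].
Qed.

End iid_expectation.

Lemma subgaussian_mgf_le {d : measure_display} {Z : measurableType d} {R : realType}
    {mu : probability Z R} {g : Z -> R} {sigma : R} (lam : R) :
  subgaussian mu g sigma ->
  (\int[mu]_z (expR (lam * g z))%:E
    <= (expR (lam * fine (\int[mu]_z (g z)%:E) + lam ^+ 2 * sigma ^+ 2 / 2))%:E)%E.
Proof.
move=> [ig mgf]; set m := fine _.
have mg : measurable_fun setT g by apply/measurable_EFinP; case/integrableP: ig.
have -> : (fun z => (expR (lam * g z))%:E)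
    = fun z => ((expR (lam * m))%:E * (expR (lam * (g z - m)))%:E)%E.
  by apply: funext => z; rewrite -EFinM -expRD; congr (expR _)%:E; ring.
have dev0 z : setT z -> (0 <= (expR (lam * (g z - m)))%:E)%E.
  by rewrite lee_fin expR_ge0.
have mdev : measurable_fun setT (fun z => (expR (lam * (g z - m)))%:E).
  apply/measurable_EFinP; apply: measurableT_comp => //.
  by apply: measurable_funM; [exact: measurable_cst | exact: measurable_funB].
rewrite (ge0_integralZl_EFin _ measurableT dev0 mdev (expR_ge0 _)) expRD EFinM.
by rewrite lee_wpmul2l ?lee_fin ?expR_ge0.
Qed.

Section dsum_bound.
Local Open Scope ereal_scope.
Context {R : realType} {W : countType}.

Lemma dsum_le_add_esum (x r P : W -> R) (K : R) :
  (forall w, 0 <= r w)%R -> (forall w, 0 <= P w)%R ->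
  \esum_(w in [set: W]) (P w)%:E = 1 ->
  (forall w, x w <= r w + P w * K)%R ->
  dsum (fun w => (x w)%:E) <= K%:E + \esum_(w in [set: W]) (r w)%:E.
Proof.
move=> r0 P0 P1 xle.
have maxr0D (y : R) : Num.max y 0%R = (y + Num.max (- y) 0)%R.
  by rewrite !maxEle; do 2 case: ifP => ?; lra.
have max0 (y : R) : (0 <= Num.max y 0)%R by rewrite le_max lexx orbT.
rewrite /dsum (eq_esum (b := fun w => (Num.max (x w) 0%R)%:E)); last first.
  by move=> w _; rewrite EFin_max.
rewrite [X in _ - X](eq_esum (b := fun w => (Num.max (- x w) 0%R)%:E)); last first.
  by move=> w _; rewrite EFin_max EFinN.
set Xp := esum _ (fun w => (Num.max (x w) 0%R)%:E).
set Xn := esum _ (fun w => (Num.max (- x w) 0%R)%:E).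
set Sr := esum _ (fun w => (r w)%:E).
set Kp := Num.max K 0%R; set Kn := Num.max (- K)%R 0%R.
have KpE : Kp = (K + Kn)%R by rewrite /Kp maxr0D.
have Xp0 : 0 <= Xp by apply: esum_ge0 => w _; rewrite lee_fin.
have Xn0 : 0 <= Xn by apply: esum_ge0 => w _; rewrite lee_fin.
have Sr0 : 0 <= Sr by apply: esum_ge0 => w _; rewrite lee_fin.
have split_ineq : Xp + Kn%:E <= Sr + Kp%:E + Xn.
  have P0E w : 0 <= (P w)%:E by rewrite lee_fin.
  rewrite -[Kn%:E]mule1 -[Kp%:E]mule1 -P1 -!ge0_esumZl ?max0 //.
  rewrite /Xp /Xn /Sr -!esumD;
    try by move=> w _; rewrite ?adde_ge0 ?mule_ge0 ?lee_fin ?max0.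
  apply: le_esum => w _; rewrite -!EFinM -!EFinD lee_fin.
  by rewrite (maxr0D (x w)) KpE; have := xle w; nra.
move: split_ineq Xp0 Xn0 Sr0.
case: Xn => [xn| |] //; last by case: Xp => [xp| |] //= *; rewrite ?leNye.
case: Sr => [sr| |] //; last by move=> *; rewrite addey ?leey.
by case: Xp => [xp| |] //= + _ _ _; rewrite -!EFinD !lee_fin KpE; lra.
Qed.

End dsum_bound.

Section gibbs_mean.
Context {R : realType} {W : countType}.
Variables (e m Q : W -> R) (gamma A : R) (wh : W).
Hypotheses (gamma0 : 0 < gamma) (A0 : 0 < A) (Q0 : forall w, 0 <= Q w) (Qwh0 : 0 < Q wh).

Let q w := expR (- gamma * e w) * Q w.
Let r w := Q w * expR (gamma * m w) / (gamma * A) * expR (- gamma * e w).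
Let K := (ln (Q wh)^-1 + ln A - 1) / gamma + e wh.

Let q0 w : 0 <= q w. Proof. by rewrite mulr_ge0 ?expR_ge0. Qed.

Let r0 w : 0 <= r w.
Proof. by rewrite mulr_ge0 ?expR_ge0 // divr_ge0 ?mulr_ge0 ?expR_ge0 // ltW. Qed.

Let gibbs_mean_le_fin (Zs : R) : (\esum_(w in [set: W]) (q w)%:E = Zs%:E)%E ->
  (dsum (fun w => (q w / Zs * m w)%:E) <= K%:E + \esum_(w in [set: W]) (r w)%:E)%E.
Proof.
move=> qE.
have qwh_Zs : q wh <= Zs.
  rewrite -lee_fin -qE; apply: esum_ge; exists [set wh]; last by rewrite fsbig_set1.
  by split; [exact: finite_set1 | by []].
have Zs0 : 0 < Zs by apply: lt_le_trans qwh_Zs; rewrite mulr_gt0 ?expR_gt0.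
apply: (@dsum_le_add_esum _ _ _ _ (fun w => q w / Zs)) => //; last move=> w.
- by move=> w; rewrite divr_ge0 // ltW.
- rewrite (eq_esum (b := fun w => ((Zs^-1)%:E * (q w)%:E)%E)); last first.
    by move=> w _; rewrite mulrC EFinM.
  by rewrite ge0_esumZl ?invr_ge0 ?(ltW Zs0) // qE -EFinM mulVf ?gt_eqF.
have lnK : ln (A / Zs) - 1 <= gamma * K.
  have : ln (q wh) <= ln Zs by rewrite ler_ln ?posrE // mulr_gt0 ?expR_gt0.
  rewrite lnM ?posrE ?invr_gt0 // lnV ?posrE // /q lnM ?posrE ?expR_gt0 // expRK.
  have -> : gamma * K = - ln (Q wh) + ln A - 1 + gamma * e wh.
    by rewrite /K lnV ?posrE //; field; rewrite gt_eqF.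
  lra.
have y0 : 0 < A / Zs by rewrite divr_gt0.
have young : gamma * m w * (A / Zs) <= expR (gamma * m w) + A / Zs * (gamma * K).
  have := ler_wpM2l (ltW y0) lnK; have := expR_young (gamma * m w) _ y0.
  rewrite mulrBr mulr1; lra.
have c0 : 0 <= q w / (gamma * A) by rewrite divr_ge0 ?mulr_ge0 // ltW.
have := ler_wpM2l c0 young.
have -> : q w / (gamma * A) * (gamma * m w * (A / Zs)) = q w / Zs * m w.
  by field; rewrite !gt_eqF.
have -> : q w / (gamma * A) * (expR (gamma * m w) + A / Zs * (gamma * K))
    = r w + q w / Zs * K.
  by rewrite /r /q; field; rewrite !gt_eqF.
by [].
Qed.

Let gibbs_mean_le_infty : (forall w, m wh <= m w) ->
  (\esum_(w in [set: W]) (q w)%:E = +oo)%E -> (\esum_(w in [set: W]) (r w)%:E = +oo)%E.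
Proof.
move=> mmin qE; set k := expR (gamma * m wh) / (gamma * A).
have k0 : 0 < k by rewrite divr_gt0 ?mulr_gt0 // expR_gt0.
apply/eqP; rewrite -leye_eq.
have -> : +oo%E = (k%:E * \esum_(w in [set: W]) (q w)%:E)%E by rewrite qE gt0_muley ?lte_fin.
rewrite -ge0_esumZl ?(ltW k0) //.
apply: le_esum => w _; rewrite -EFinM lee_fin.
have -> : k * q w = q w / (gamma * A) * expR (gamma * m wh) by rewrite /k; ring.
have -> : r w = q w / (gamma * A) * expR (gamma * m w) by rewrite /r /q; ring.
by rewrite ler_wpM2l ?ler_expR ?ler_pM2l // divr_ge0 ?mulr_ge0 // ltW.
Qed.

(* For an infinite normaliser, [fine +oo = 0] makes the Gibbs weights vanish;
   the bound then holds because its right-hand side is [+oo], which is where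
   the minimality of [m wh] is needed. *)
Lemma gibbs_mean_le : (forall w, m wh <= m w) ->
  (dsum (fun w => (expR (- gamma * e w) * Q w /
       fine (\esum_(v in [set: W]) (expR (- gamma * e v) * Q v)%:E) * m w)%:E)
   <= ((ln (Q wh)^-1 + ln A - 1) / gamma + e wh)%:E
      + \esum_(w in [set: W])
          (Q w * expR (gamma * m w) / (gamma * A) * expR (- gamma * e w))%:E)%E.
Proof.
move=> mmin.
change (dsum (fun w => (q w / fine (\esum_(v in [set: W]) (q v)%:E) * m w)%:E)
  <= K%:E + \esum_(w in [set: W]) (r w)%:E)%E.
have : (0 <= \esum_(v in [set: W]) (q v)%:E)%E by apply: esum_ge0 => v _; rewrite lee_fin.
case qE: (\esum_(v in [set: W]) (q v)%:E)%E => [Zs| |] // _; first exact: gibbs_mean_le_fin.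
have -> : dsum (fun w => (q w / fine +oo%E * m w)%:E) = 0%E.
  by rewrite /dsum !esum1 ?subee // => w _; rewrite invr0 mulr0 mul0r ?oppe0 maxxx.
by rewrite gibbs_mean_le_infty // addey.
Qed.

End gibbs_mean.

Section gibbs_posterior.
Context {d : measure_display} {Z : measurableType d} {R : realType} {W : countType}.

Lemma expR_emp_mean (f : W -> Z -> R) (c : R) (s : seq Z) (w : W) :
  expR (c * emp_mean f s w) = \prod_(z <- s) expR (c / (size s)%:R * f w z).
Proof.
rewrite -expR_sum /emp_mean mulr_suml mulr_sumr; congr expR.
by apply: eq_bigr => z _; ring.
Qed.

Lemma gibbs_risk_le (mu : probability Z R) (f : W -> Z -> R) (Q : W -> R)
    (gamma A : R) (wh : W) (s : seq Z) :
  0 < gamma -> 0 < A -> (forall w, 0 <= Q w) -> 0 < Q wh ->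
  (forall w, true_mean mu f wh <= true_mean mu f w) ->
  (gibbs_risk mu f Q gamma s
   <= ((ln (Q wh)^-1 + ln A - 1) / gamma + \sum_(z <- s) f wh z / (size s)%:R)%:E
      + \esum_(w in [set: W]) (Q w * expR (gamma * true_mean mu f w) / (gamma * A)
                             * \prod_(z <- s) expR (- gamma / (size s)%:R * f w z))%:E)%E.
Proof.
move=> gamma0 A0 Q0 Qwh0 mmin.
apply: le_trans (gibbs_mean_le (emp_mean f s) _ _ _ _ _ gamma0 A0 Q0 Qwh0 mmin) _.
apply: leeD; first by rewrite /emp_mean mulr_suml.
by apply: le_esum => w _; rewrite expR_emp_mean.
Qed.

End gibbs_posterior.

Theorem proposition5 (R : realType) (d : measure_display) (Z : measurableType d)
  (W : countType) (f : W -> Z -> R) (Q : W -> R) (gamma sigma : R)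
  (mu : probability Z R) (n : nat) (w_hat : W) :
  (forall w, measurable_fun setT (f w)) ->
  distribution_on Q ->
  0 < gamma ->
  (forall w, subgaussian mu (f w) sigma) ->
  (forall w, true_mean mu f w_hat <= true_mean mu f w) ->
  (0 < n)%N ->
  (iid_expect mu n (gibbs_risk mu f Q gamma)
     <= ereal_inf (range (fun w => (true_mean mu f w)%:E))
        + (gamma^-1)%:E * KL_dirac Q w_hat
        + (gamma * sigma ^+ 2 / (2 * n%:R))%:E)%E.
Proof.
move=> mf [Q0 Qsum] gamma0 sg mmin n0.
rewrite (ereal_inf_range_min _ w_hat) => [|w]; last by rewrite lee_fin.
have [Qwh0|Qwh0] := ltP 0 (Q w_hat); last first.
  by rewrite /KL_dirac ltNge Qwh0 /= gt0_muley ?lte_fin ?invr_gt0 // addey // addye // leey.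
rewrite /KL_dirac Qwh0.
set m := true_mean mu f; set A := expR (gamma ^+ 2 * sigma ^+ 2 / (2 * n%:R)).
set a := fun w => Q w * expR (gamma * m w) / (gamma * A).
have A0 : 0 < A by exact: expR_gt0.
pose h w z := expR (- gamma / n%:R * f w z).
have a0 w : 0 <= a w by rewrite divr_ge0 ?mulr_ge0 ?expR_ge0 // ltW.
have h0 w z : 0 <= h w z by exact: expR_ge0.
have mh w : measurable_fun setT (h w).
  by apply: measurableT_comp => //; apply: measurable_funM => //; exact: measurable_cst.
apply: le_trans (le_iid_expect mu n _ (fun s =>
    (((ln (Q w_hat)^-1 + ln A - 1) / gamma + \sum_(z <- s) f w_hat z / n%:R)%:E
     + \esum_(w in [set: W]) (a w * \prod_(z <- s) h w z)%:E)%E) _) _.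
  move=> s sz.
  by apply: le_trans (gibbs_risk_le _ _ _ _ _ _ _ gamma0 A0 Q0 Qwh0 mmin) _; rewrite sz.
have ig := integrable_EFin_mulr mu _ n%:R^-1 (sg w_hat).1.
apply: le_trans (iid_expect_affine_esum_le mu ig (integral_EFin_mulr mu _ _ (sg w_hat).1)
  h0 mh (fun w => subgaussian_mgf_le _ (sg w)) _ _ _ a0) _.
have nR0 : (n%:R : R) != 0 by rewrite pnatr_eq0 -lt0n.
have aE w : a w * expR (- gamma / n%:R * m w
    + (- gamma / n%:R) ^+ 2 * sigma ^+ 2 / 2) ^+ n = gamma^-1 * Q w.
  rewrite -expRM_natl (_ : n%:R * _ = - (gamma * m w) + ln A); last first.
    by rewrite expRK; field.
  by rewrite expRD expRN lnK ?posrE ?expR_gt0 // /a; field; rewrite !gt_eqF ?expR_gt0.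
rewrite (eq_esum (b := fun w => ((gamma^-1)%:E * (Q w)%:E)%E)); last first.
  by move=> w _; rewrite aE EFinM.
rewrite ge0_esumZl ?invr_ge0 ?(ltW gamma0) // Qsum mule1 -!EFinM -!EFinD lee_fin /A expRK.
rewrite -[fine _]/(m w_hat) le_eqVlt; apply/orP; left; apply/eqP.
by field; rewrite nR0 gt_eqF.
Qed.
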